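(* Let $\mathcal{M}=(E,\rho)$ be a $q$-matroid, $l=\dim\mathrm{cl}(0)$ and $f=\dim E-\dim\mathrm{cyc}(E)$. (a) There exists a full $q$-matroid $\mathcal{M}'$ such that $\mathcal{M}\approx\mathcal{U}_{0,l}\oplus\mathcal{U}_{f,f}\oplus\mathcal{M}'$. (b) If $\mathcal{M}\approx\mathcal{U}_{0,a}\oplus\mathcal{U}_{b,b}\oplus\mathcal{N}$ with $\mathcal{N}$ full, then $a=l$, $b=f$ and $\mathcal{N}\approx\mathcal{M}'$.
   Context: Let $\mathbb{F}=\mathbb{F}_q$. A $q$-matroid is $\mathcal{M}=(E,\rho)$, $E$ a finite-dimensional $\mathbb{F}$-vector space, $\rho$ from subspaces to $\mathbb{Z}_{\ge0}$ with $0\le\rho(V)\le\dim V$, monotone and submodular. Closure: $\mathrm{cl}(V)=\sum\{\langle x\rangle: \rho(V+\langle x\rangle)=\rho(V)\}$. Cyclic core: $\mathrm{cyc}(V)=\{x\in V\mid\rho(W)=\rho(V)\text{ for all }W\le V\text{ with }W+\langle x\rangle=V\}$. $\mathcal{M}$ is full if $\mathrm{cl}(0)=0$ and $\mathrm{cyc}(E)=E$. The uniform $q$-matroid $\mathcal{U}_k(E)$ has $\rho(V)=\min\{k,\dim V\}$; $\mathcal{U}_{0,n}$ and $\mathcal{U}_{n,n}$ denote $\mathcal{U}_0(E)$ and $\mathcal{U}_n(E)$ on some $n$-dimensional space $E$ (defined up to equivalence). Equivalence $\approx$: an $\mathbb{F}$-isomorphism of ground spaces preserving rank. Direct sum: for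 $E=E_1\oplus E_2$ with projections $\pi_i$, $\mathcal{M}_1\oplus\mathcal{M}_2=(E,\rho)$ with $\rho(V)=\dim V+\min_{X\le V}(\rho_1(\pi_1(X))+\rho_2(\pi_2(X))-\dim X)$; this is associative. *)

From HB Require Import structures.
From mathcomp Require Import all_boot all_order all_algebra all_field.

Set Implicit Arguments.
Unset Strict Implicit.
Unset Printing Implicit Defensive.

Import GRing.Theory Num.Theory.

(* The subspaces of a finite-dimensional space over a finite field form a
   finite type; we expose this through an alias of {vspace E}. *)
Definition qsubsp (F : finFieldType) (E : vectType F) : predArgType := @space F E.
HB.instance Definition _ (F : finFieldType) (E : vectType F) :=
  Finite.copy (@qsubsp F E) (can_type (@vector.VectorInternalTheory.vs2mxK F E)).



Definition is_qmatroid (F : finFieldType) (E : vectType F)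
    (rho : {vspace E} -> nat) : Prop :=
  [/\ forall V : {vspace E}, (rho V <= \dim V)%N,
      forall V W : {vspace E}, (V <= W)%VS -> (rho V <= rho W)%N
    & forall V W : {vspace E}, (rho (V + W)%VS + rho (V :&: W)%VS <= rho V + rho W)%N].

Definition qcl (F : finFieldType) (E : vectType F)
    (rho : {vspace E} -> nat) (V : {vspace E}) : {vspace E} :=
  (\sum_(x : finvect_type E | rho (V + <[x : E]>) == rho V) <[x : E]>)%VS.

Definition qcyc_mem (F : finFieldType) (E : vectType F)
    (rho : {vspace E} -> nat) (V : {vspace E}) (x : E) : bool :=
  (x \in V) &&
  [forall W : @qsubsp F E, ((W <= V)%VS && ((W + <[x]>)%VS == V)) ==> (rho W == rho V)].

(* cyc(V), as the subspace spanned by its elements (the set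
   {x | qcyc_mem rho V x} is itself a subspace). *)
Definition qcyc (F : finFieldType) (E : vectType F)
    (rho : {vspace E} -> nat) (V : {vspace E}) : {vspace E} :=
  (\sum_(x : finvect_type E | qcyc_mem rho V (x : E)) <[x : E]>)%VS.

Definition qfull (F : finFieldType) (E : vectType F)
    (rho : {vspace E} -> nat) : Prop :=
  qcl rho 0%VS = 0%VS /\ qcyc rho fullv = fullv.

Definition quniform (F : finFieldType) (E : vectType F) (k : nat)
    (V : {vspace E}) : nat := minn k (\dim V).

Definition qU (F : finFieldType) (k n : nat) : {vspace 'rV[F]_n} -> nat :=
  @quniform F 'rV[F]_n k.

Definition qequiv (F : finFieldType) (E1 E2 : vectType F)
    (rho1 : {vspace E1} -> nat) (rho2 : {vspace E2} -> nat) : Prop :=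
  exists g : 'Hom(E1, E2),
    [/\ lker g = 0%VS, limg g = fullv
      & forall V : {vspace E1}, rho2 (g @: V)%VS = rho1 V].

(* Direct sum on E = E1 (+) E2 (realised as E1 * E2) with projections pi_i:
   rho(V) = dim V + min_{X <= V} (rho1(pi1 X) + rho2(pi2 X) - dim X),
   computed in int (the value is a nonnegative integer: the min is at
   most 0, attained at X = 0 which justifies the neutral element 0, and
   at least -dim V), then returned as a nat. *)
Definition qdsum (F : finFieldType) (E1 E2 : vectType F)
    (rho1 : {vspace E1} -> nat) (rho2 : {vspace E2} -> nat)
    (V : {vspace (E1 * E2)%type}) : nat :=
  absz ((\dim V)%:Z +
        \big[Num.min/0%R]_(X : @qsubsp F (E1 * E2)%type | (X <= V)%VS)
           ((rho1 (linfun (@fst E1 E2) @: X)%VS)%:Z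
            + (rho2 (linfun (@snd E1 E2) @: X)%VS)%:Z - (\dim X)%:Z))%R.

(* The loops cl(0) are the vectors of rank 0, and adding them to a subspace never changes
   its rank. Call D tight when rho D + codim D = rho E: tight subspaces are closed under
   intersection, the least one is cyc(E) =: C, and tightness of C gives
   rho V = rho (V :&: C) + dim V - dim (V :&: C).
   A basis adapted to cl(0) <= C <= E identifies E with F^l x F^f x F^m, sending cl(0) to
   F^l x 0 x 0 and C to F^l x 0 x F^m; the two rank identities then say that rho is the direct
   sum of U_{0,l}, U_{f,f} and its restriction to 0 x 0 x F^m, and that restriction is full.
   Conversely, in U_{0,a} (+) U_{b,b} (+) N with N full the loops are F^a x 0 x 0 and the
   cyclic core is F^a x 0 x N, so an equivalence of two such sums matches these subspaces,
   which determines a and b and induces an equivalence of the N-parts. *)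

From HB Require Import structures.
From mathcomp Require Import all_boot all_order all_algebra all_field zify.

Set Implicit Arguments.
Unset Strict Implicit.
Unset Printing Implicit Defensive.

Import GRing.Theory Num.Theory Order.TTheory.

(* The same dimension or rank may occur under different but convertible vectType instances,
   which lia would treat as distinct atoms; abstracting them with [set] identifies them. *)
Ltac rank_lia :=
  repeat match goal with
  | H : is_true (leq _ _) |- _ => revert H
  | H : @eq ?T _ _ |- _ => change T with nat in H; revert H
  end;
  repeat match goal with
  | |- context [@dimv ?K ?vT ?U] =>
      let d := fresh "d" in set d : nat := @dimv K vT U; clearbody d
  | |- context [?r ?U] =>
      match type of U with @space _ _ =>
        match type of (r U) with nat =>
          let d := fresh "d" in set d : nat := r U; clearbody d end end
  end;
  lia.

Section QMatroidRank.
Variables (F : finFieldType) (E : vectType F) (rho : {vspace E} -> nat).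
Hypothesis rho_qm : is_qmatroid rho.

Lemma qrank_le_dim V : (rho V <= \dim V)%N. Proof. by case: rho_qm. Qed.

Lemma qrankS V W : (V <= W)%VS -> (rho V <= rho W)%N.
Proof. by case: rho_qm => _ + _; apply. Qed.

Lemma qrank_submod V W : (rho (V + W)%VS + rho (V :&: W)%VS <= rho V + rho W)%N.
Proof. by case: rho_qm. Qed.

Lemma qrank0 : rho 0%VS = 0.
Proof. by have := qrank_le_dim 0%VS; rewrite dimv0; lia. Qed.

Lemma qrank_addv_le V W : (rho (V + W)%VS <= rho V + rho W)%N.
Proof. by have := qrank_submod V W; lia. Qed.

Lemma qrank_extend_le U V :
  (U <= V)%VS -> (rho V <= rho U + (\dim V - \dim U))%N.
Proof.
move=> sUV; have VU : (V :&: U = U)%VS by apply/capv_idPr.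
have := qrank_addv_le (V :\: U)%VS U; rewrite -{2}VU addv_diff_cap.
have := dimv_cap_compl V U; have := qrank_le_dim (V :\: U)%VS; rewrite VU; lia.
Qed.

Lemma qrank_qcl0 : rho (qcl rho 0%VS) = 0.
Proof.
apply: (big_ind (fun X => rho X = 0)); first exact: qrank0.
  by move=> X Y X0 Y0; have := qrank_addv_le X Y; rewrite X0 Y0; lia.
by move=> x /eqP; rewrite add0v qrank0.
Qed.

Lemma mem_qcl0 v : (v \in qcl rho 0%VS) = (rho <[v]>%VS == 0).
Proof.
apply/idP/eqP => [v_cl | rho_v]; first by have := qrankS v_cl; rewrite qrank_qcl0; lia.
by rewrite memvE; apply: (sumv_sup (v : finvect_type E)); rewrite ?add0v ?rho_v ?qrank0.
Qed.

Lemma qrank_addv_qcl0 V : rho (V + qcl rho 0%VS)%VS = rho V.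
Proof.
apply/eqP; rewrite eqn_leq [(rho V <= _)%N]qrankS ?addvSl // andbT.
by have := qrank_addv_le V (qcl rho 0%VS); rewrite qrank_qcl0 addn0.
Qed.

End QMatroidRank.

Lemma capv_line_notin (K : fieldType) (vT : vectType K) (U : {vspace vT}) x :
  x \notin U -> (U :&: <[x]> = 0)%VS.
Proof.
move=> xU; apply/eqP; rewrite -subv0; apply/subvP => y /memv_capP[yU /vlineP[k ey]].
rewrite memv0 ey scaler_eq0; apply: contraR xU => /norP[k0 _].
by rewrite -(scalerK k0 x) memvZ // -ey.
Qed.

Lemma dim_vline_notin (K : fieldType) (vT : vectType K) (U : {vspace vT}) x :
  x \notin U -> \dim (U + <[x]>)%VS = (\dim U).+1.
Proof.
move=> xU; have x0 : (x != 0)%R by apply: contraNneq xU => ->; rewrite mem0v.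
have := dimv_sum_cap U <[x]>%VS.
by rewrite capv_line_notin // dimv0 dim_vline x0 addn0 addn1.
Qed.

Lemma exists_hyperplane_avoiding (K : fieldType) (vT : vectType K)
    (T : {vspace vT}) x :
  x \notin T -> exists H : {vspace vT},
    [/\ (T <= H)%VS, x \notin H & (H + <[x]> = fullv)%VS].
Proof.
move=> xT; set U := (T + <[x]>)%VS; exists (T + U^C)%VS.
have HxE : (T + U^C + <[x]> = fullv)%VS.
  by rewrite -addvA [(U^C + _)%VS]addvC addvA addv_complf.
split=> //; first exact: addvSl.
apply/negP => xH; have : \dim (T + U^C)%VS = \dim (@fullv K vT).
  by rewrite -HxE; have /addv_idPl -> : (<[x]> <= T + U^C)%VS by rewrite -memvE.
have := dimv_sum_cap T U^C; rewrite dimv_compl dim_vline_notin //.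
by have := dimvS (subvf U); rewrite dim_vline_notin //; lia.
Qed.

Section CyclicCore.
Variables (F : finFieldType) (E : vectType F) (rho : {vspace E} -> nat).
Hypothesis rho_qm : is_qmatroid rho.

(* The reverse inequality always holds ([qrank_extend_le]). *)
Definition qtight (D : {vspace E}) : bool :=
  (rho D + (\dim (@fullv F E) - \dim D) <= rho fullv)%N.

Lemma qtightf : qtight fullv.
Proof. by rewrite /qtight subnn addn0. Qed.

Lemma qtight_cap D1 D2 : qtight D1 -> qtight D2 -> qtight (D1 :&: D2)%VS.
Proof.
rewrite /qtight; have := qrank_submod rho_qm D1 D2.
have := qrank_extend_le rho_qm (subvf (D1 + D2)%VS).
have := dimv_sum_cap D1 D2; have := dimvS (subvf (D1 + D2)%VS).
have := dimvS (subvf D1); have := dimvS (subvf D2); have := dimvS (capvSl D1 D2).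
lia.
Qed.

Lemma exists_min_qtight :
  exists2 T, qtight T & forall D, qtight D -> (T <= D)%VS.
Proof.
have ex_dim : exists n, [exists D : qsubsp E, qtight D && (\dim D == n)].
  by exists (\dim (@fullv F E)); apply/existsP; exists (fullv : qsubsp E); rewrite qtightf eqxx.
case: (ex_minnP ex_dim) => n /existsP[T /andP[tT /eqP dT]] Tmin.
exists T => // D tD; have tTD := qtight_cap tT tD.
have : (n <= \dim (T :&: D)%VS)%N.
  by apply: Tmin; apply/existsP; exists ((T :&: D)%VS : qsubsp E); rewrite tTD eqxx.
rewrite -dT => dTD; have /eqP <- : (T :&: D == T)%VS by rewrite eqEdim capvSl dTD.
exact: capvSr.
Qed.

Section MinimalTight.
Variable T : {vspace E}.
Hypotheses (tT : qtight T) (Tmin : forall D, qtight D -> (T <= D)%VS).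

(* A hyperplane through T avoiding x loses rank, since T is tight. *)
Lemma qcyc_mem_sub_min_qtight x : qcyc_mem rho fullv x -> x \in T.
Proof.
case/andP => _ /forallP x_cyc; apply/negPn/negP => /exists_hyperplane_avoiding.
case=> H [sTH xH HxE]; have := x_cyc (H : qsubsp E); rewrite subvf HxE eqxx /=.
have := qrank_extend_le rho_qm sTH; have := dimvS sTH; have := dimvS (subvf H).
have : \dim H != \dim (@fullv F E).
  apply: contra xH => /eqP dH.
  have /eqP -> : H == fullv by rewrite eqEdim subvf dH leqnn.
  exact: memvf.
move: tT; rewrite /qtight; lia.
Qed.

(* A complement W of x with smaller rank would be tight without containing T. *)
Lemma min_qtight_sub_qcyc_mem x : x \in T -> qcyc_mem rho fullv x.
Proof.
move=> xT; rewrite /qcyc_mem memvf; apply/forallP => W.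
apply/implyP => /andP[_ /eqP WxE]; apply/negPn/negP => rhoW.
have : \dim (@fullv F E) <= (\dim W).+1.
  rewrite -WxE; have := dimv_sum_cap W <[x]>%VS; have := dim_vline x.
  by case: (x != 0)%R => /= ->; lia.
move=> dimW; have /Tmin/subvP/(_ x xT) xW : qtight W.
  have := qrankS rho_qm (subvf W); have := qrank_extend_le rho_qm (subvf W).
  by rewrite /qtight; move/eqP: rhoW; lia.
by move: rhoW; rewrite -WxE (addv_idPl _) ?eqxx // -memvE.
Qed.

Lemma qcyc_min_qtight : qcyc rho fullv = T.
Proof.
apply/subv_anti/andP; split.
  by apply/subv_sumP => x /qcyc_mem_sub_min_qtight; rewrite memvE.
apply/subvP => v /min_qtight_sub_qcyc_mem v_cyc.
by rewrite memvE; apply: (sumv_sup (v : finvect_type E)).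
Qed.

End MinimalTight.

Local Notation C := (qcyc rho fullv).

Lemma qtight_qcyc : qtight C.
Proof. by have [T tT Tmin] := exists_min_qtight; rewrite (qcyc_min_qtight tT Tmin). Qed.

Lemma qcyc_sub_qtight D : qtight D -> (C <= D)%VS.
Proof.
by have [T tT Tmin] := exists_min_qtight; rewrite (qcyc_min_qtight tT Tmin); apply: Tmin.
Qed.

Lemma mem_qcyc x : (x \in C) = qcyc_mem rho fullv x.
Proof.
have [tC Cmin] := (qtight_qcyc, qcyc_sub_qtight).
by apply/idP/idP; [exact: min_qtight_sub_qcyc_mem tC Cmin x | exact: qcyc_mem_sub_min_qtight].
Qed.

Lemma qrank_split_qcyc V : rho V = (rho (V :&: C)%VS + (\dim V - \dim (V :&: C)%VS))%N.
Proof.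
have := qtight_qcyc; rewrite /qtight.
have := qrank_extend_le rho_qm (capvSl V C); have := qrank_submod rho_qm V C.
have := qrank_extend_le rho_qm (subvf (V + C)%VS).
have := dimv_sum_cap V C; have := dimvS (subvf (V + C)%VS); have := dimvS (capvSl V C).
lia.
Qed.

Lemma qcl0_sub_qcyc : (qcl rho 0%VS <= C)%VS.
Proof.
apply/subvP => x; rewrite (mem_qcl0 rho_qm) mem_qcyc => /eqP rho_x.
rewrite /qcyc_mem memvf; apply/forallP => W; apply/implyP => /andP[_ /eqP WxE].
have := qrank_addv_le rho_qm W <[x]>%VS; rewrite WxE rho_x addn0.
by have := qrankS rho_qm (subvf W); lia.
Qed.

End CyclicCore.

Lemma qfull_rank_line_eq0 (F : finFieldType) (E : vectType F) (rho : {vspace E} -> nat) y :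
  is_qmatroid rho -> qfull rho -> rho <[y]>%VS = 0 -> y = 0%R.
Proof.
by move=> rho_qm [cl0 _] /eqP; rewrite -(mem_qcl0 rho_qm) cl0 memv0 => /eqP.
Qed.

Lemma qmatroid_pullback (F : finFieldType) (E1 E2 : vectType F)
    (g : 'Hom(E1, E2)) (rho : {vspace E2} -> nat) (sigma : {vspace E1} -> nat) :
  lker g = 0%VS -> is_qmatroid rho -> (forall V, sigma V = rho (g @: V)%VS) ->
  is_qmatroid sigma.
Proof.
move=> g_inj [rho_dim rhoS rho_submod] sigmaE; split=> [V | V W sVW | V W].
- by rewrite sigmaE -[leqRHS](limg_dim_eq (f := g)) ?g_inj ?capv0.
- by rewrite !sigmaE rhoS ?limgS.
- by rewrite !sigmaE limgD lker0_img_cap ?g_inj.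
Qed.

Section Isomorphism.
Variables (F : finFieldType) (E1 E2 : vectType F) (g : 'Hom(E1, E2)).
Hypotheses (g_inj : lker g = 0%VS) (g_surj : limg g = fullv).

Lemma limg_invK W : (g @: (g^-1 @: W))%VS = W.
Proof.
rewrite -limg_comp; have -> : (g \o g^-1)%VF = \1%VF.
  by apply/lfunP => u; rewrite comp_lfunE id_lfunE limg_lfunVK // g_surj memvf.
exact: lim1g.
Qed.

Lemma lker_inv : lker g^-1%VF = 0%VS.
Proof.
apply/eqP; rewrite -subv0; apply/subvP => u; rewrite memv_ker memv0 => /eqP gVu.
by rewrite -[u](limg_lfunVK (f := g)) ?g_surj ?memvf // gVu linear0.
Qed.

Lemma limg_inv : limg g^-1%VF = fullv.
Proof. by rewrite -{1}g_surj -limg_comp lker0_compVf ?g_inj // lim1g. Qed.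

Lemma mem_limg_iso w U : (w \in g @: U)%VS = (g^-1%VF w \in U).
Proof.
by rewrite memvE -{1}(limg_invK <[w]>%VS) limg_ker0 ?g_inj // limg_line -memvE.
Qed.

Variables (rho1 : {vspace E1} -> nat) (rho2 : {vspace E2} -> nat).
Hypotheses (rho_g : forall V, rho2 (g @: V)%VS = rho1 V) (rho1_qm : is_qmatroid rho1).

Lemma qrank_iso_inv W : rho2 W = rho1 (g^-1 @: W)%VS.
Proof. by rewrite -rho_g limg_invK. Qed.

Lemma qmatroid_iso : is_qmatroid rho2.
Proof. exact: qmatroid_pullback lker_inv rho1_qm qrank_iso_inv. Qed.
Let rho2_qm := qmatroid_iso.

Lemma qequiv_iso_sym : qequiv rho2 rho1.
Proof.
by exists g^-1%VF; split=> [||W]; [exact: lker_inv | exact: limg_inv | rewrite qrank_iso_inv].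
Qed.

Lemma qcl0_iso : qcl rho2 0%VS = (g @: qcl rho1 0%VS)%VS.
Proof.
apply/vspaceP => w.
by rewrite mem_limg_iso (mem_qcl0 rho2_qm) (mem_qcl0 rho1_qm) qrank_iso_inv limg_line.
Qed.

Lemma qtight_iso D : qtight rho2 (g @: D)%VS = qtight rho1 D.
Proof.
have dim_g V : \dim (g @: V) = \dim V by rewrite limg_dim_eq // g_inj capv0.
by rewrite /qtight -{1 2}g_surj !rho_g !dim_g.
Qed.

Lemma qcyc_iso : qcyc rho2 fullv = (g @: qcyc rho1 fullv)%VS.
Proof.
apply/subv_anti/andP; split.
  by apply: (qcyc_sub_qtight rho2_qm); rewrite qtight_iso qtight_qcyc.
rewrite -[X in (_ <= X)%VS]limg_invK limg_ker0 ?g_inj //.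
by apply: (qcyc_sub_qtight rho1_qm); rewrite -qtight_iso limg_invK qtight_qcyc.
Qed.

End Isomorphism.

Lemma qequiv_sym (F : finFieldType) (E1 E2 : vectType F)
    (rho1 : {vspace E1} -> nat) (rho2 : {vspace E2} -> nat) :
  qequiv rho1 rho2 -> qequiv rho2 rho1.
Proof. by case=> g [g_inj g_surj rho_g]; exact: qequiv_iso_sym rho_g. Qed.

Lemma qequiv_trans (F : finFieldType) (E1 E2 E3 : vectType F)
    (rho1 : {vspace E1} -> nat) (rho2 : {vspace E2} -> nat) (rho3 : {vspace E3} -> nat) :
  qequiv rho1 rho2 -> qequiv rho2 rho3 -> qequiv rho1 rho3.
Proof.
case=> g [g_inj g_surj rho_g] [h [h_inj h_surj rho_h]].
exists (h \o g)%VF; split; last by move=> V; rewrite limg_comp rho_h rho_g.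
  have /lker0P g_injf : lker g == 0%VS by rewrite g_inj.
  have /lker0P h_injf : lker h == 0%VS by rewrite h_inj.
  by apply/eqP/lker0P => x y; rewrite !comp_lfunE => /h_injf/g_injf.
by rewrite limg_comp g_surj h_surj.
Qed.

Lemma quniform_qmatroid (F : finFieldType) (E : vectType F) (k : nat) :
  is_qmatroid (@quniform F E k).
Proof.
rewrite /quniform; split=> [V | V W /dimvS | V W]; [exact: geq_minr | lia |].
have := dimv_sum_cap V W; have := dimvS (capvSl V W); have := dimvS (capvSr V W).
have := dimvS (addvSl V W); have := dimvS (addvSr V W); lia.
Qed.

Lemma qrank_limg_extend_le (F : finFieldType) (E1 E2 : vectType F)
    (tau : {vspace E2} -> nat) (f : 'Hom(E1, E2)) (Y W : {vspace E1}) :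
  is_qmatroid tau -> (Y <= W)%VS ->
  (tau (f @: W)%VS + \dim Y <= tau (f @: Y)%VS + \dim W)%N.
Proof.
move=> tau_qm sYW; have := qrank_extend_le tau_qm (limgS f sYW).
have := limg_ker_dim f Y; have := limg_ker_dim f W.
have := dimvS (limgS f sYW); have := dimvS (capvS sYW (subvv (lker f))); lia.
Qed.

Lemma bigmin_attained (I : finType) (P : pred I) (G : I -> int) (m : int) :
  (m <= 0)%R -> (forall i, P i -> m <= G i)%R -> (exists2 i, P i & G i = m) ->
  \big[Num.min/0%R]_(i | P i) G i = m.
Proof.
move=> m_le0 m_low [i Pi Gi]; apply/eqP; rewrite eq_le; apply/andP; split.
  by rewrite (bigD1 i) //= ge_min Gi lexx.
by apply: (big_ind (fun y => m <= y)%R) => // x y; rewrite le_min => -> ->.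
Qed.

Section DirectSumRank.
Variables (F : finFieldType) (E1 E2 B : vectType F) (p : 'Hom(E1, B)).
Variables (r1 : {vspace E1} -> nat) (tau : {vspace E2} -> nat).
Hypotheses (r1E : forall Y, r1 Y = \dim (p @: Y)) (tau_qm : is_qmatroid tau).

Local Notation fst := (linfun (@fst E1 E2)).
Local Notation snd := (linfun (@snd E1 E2)).
Local Notation K := (lker (p \o fst)%VF).

Lemma qdsum_rank_lker V :
  qdsum r1 tau V = (\dim V - \dim (V :&: K) + tau (snd @: (V :&: K)))%N.
Proof.
set W := (V :&: K)%VS.
rewrite /qdsum (@bigmin_attained _ _ _ ((tau (snd @: W))%:Z - (\dim W)%:Z)%R).
- rewrite [(_ + _)%R](_ : _ = Posz (\dim V - \dim W + tau (snd @: W))) //.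
  by have := dimvS (capvSl V K); rank_lia.
- have := qrank_le_dim tau_qm (snd @: W)%VS; have := limg_ker_dim snd W.
  by rank_lia.
- move=> X sXV; have sXKW : (X :&: K <= W)%VS by apply: capvS.
  have := qrank_limg_extend_le snd tau_qm sXKW.
  have := qrankS tau_qm (limgS snd (capvSl X K)).
  have := limg_ker_dim (p \o fst)%VF X; rewrite r1E limg_comp.
  by rank_lia.
- exists (W : qsubsp _); first exact: capvSl.
  rewrite r1E -limg_comp; have /eqP -> : ((p \o fst) @: W == 0)%VS by rewrite -lkerE capvSr.
  by rewrite dimv0 add0r.
Qed.

End DirectSumRank.

Lemma dim_rV (F : fieldType) (n : nat) : \dim (@fullv F 'rV[F]_n) = n.
Proof. by rewrite dimvf /dim /= mul1n. Qed.

Lemma qdsum_loops_coloops (F : finFieldType) (a b : nat) Y :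
  qdsum (@qU F 0 a) (@qU F b b) Y = \dim (linfun (@snd 'rV[F]_a 'rV[F]_b) @: Y).
Proof.
have qU0 Y' : @qU F 0 a Y' = \dim ((0 : 'Hom('rV[F]_a, 'rV[F]_a)) @: Y').
  by rewrite lim0g dimv0 /qU /quniform min0n.
rewrite (qdsum_rank_lker qU0 (quniform_qmatroid _ _)).
have -> : lker ((0 : 'Hom('rV[F]_a, 'rV[F]_a))%R \o linfun (@fst 'rV[F]_a 'rV[F]_b))%VF = fullv.
  by apply/vspaceP => z; rewrite memv_ker comp_lfunE zero_lfunE eqxx memvf.
rewrite capvf subnn add0n /qU /quniform; apply/minn_idPr.
by have := dimvS (subvf (linfun (@snd 'rV[F]_a 'rV[F]_b) @: Y)%VS); rewrite dim_rV.
Qed.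

Section DirectSumModel.
Variables (F : finFieldType) (a b : nat) (N : vectType F).
Local Notation Z := (('rV[F]_a * 'rV[F]_b) * N)%type.
Local Notation snd := (linfun (@snd ('rV[F]_a * 'rV[F]_b)%type N)).

(* In U_{0,a} (+) U_{b,b} (+) N these are F^a x 0 x N and F^a x 0 x 0. *)
Definition dsum_cyc : {vspace Z} :=
  lker (linfun (@Datatypes.snd 'rV[F]_a 'rV[F]_b) \o linfun (@fst _ N))%VF.
Definition dsum_loops : {vspace Z} := (dsum_cyc :&: lker snd)%VS.

Definition dsum_embed (y : N) : Z := ((0%R, 0%R), y).

Lemma dsum_embed_linear : linear dsum_embed.
Proof. by move=> k x y; rewrite /dsum_embed; congr (_, _); rewrite /= scaler0 addr0. Qed.

HB.instance Definition _ := GRing.isSemilinear.Build F N Z _ dsum_embed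
  (GRing.semilinear_linear dsum_embed_linear).

Local Notation embed := (linfun dsum_embed).

Lemma mem_dsum_cyc z : (z \in dsum_cyc) = (z.1.2 == 0%R).
Proof. by rewrite memv_ker comp_lfunE !lfunE. Qed.

Lemma mem_dsum_loops z : (z \in dsum_loops) = (z.1.2 == 0%R) && (z.2 == 0%R).
Proof. by rewrite memv_cap mem_dsum_cyc memv_ker lfunE. Qed.

Lemma embedE y : embed y = ((0%R, 0%R), y).
Proof. exact: lfunE. Qed.

Lemma lker_embed : lker embed = 0%VS.
Proof.
apply/eqP; rewrite -subv0; apply/subvP => y; rewrite memv_ker memv0 embedE.
by move/eqP/(congr1 Datatypes.snd) => /= ->.
Qed.

Lemma snd_embed Y : (snd @: (embed @: Y))%VS = Y.
Proof.
rewrite -limg_comp; have -> : (snd \o embed)%VF = \1%VF.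
  by apply/lfunP => y; rewrite comp_lfunE id_lfunE lfunE embedE.
exact: lim1g.
Qed.

Lemma embed_sub_dsum_cyc Y : (embed @: Y <= dsum_cyc)%VS.
Proof. by apply/subvP => _ /memv_imgP[y _ ->]; rewrite mem_dsum_cyc embedE. Qed.

Lemma limg_snd_dsum_cyc : (snd @: dsum_cyc)%VS = fullv.
Proof.
apply/eqP; rewrite eqEsubv subvf; apply/subvP => y _; apply/memv_imgP.
by exists (embed y); rewrite embedE ?mem_dsum_cyc ?lfunE.
Qed.

Lemma dim_dsum : \dim (@fullv F Z) = (a + b + \dim (@fullv F N))%N.
Proof.
rewrite !dimvf; change (dim 'rV[F]_a + dim 'rV[F]_b + dim N = a + b + dim N)%N.
by rewrite -!dimvf !dim_rV.
Qed.

Lemma dim_dsum_cyc : \dim dsum_cyc = (a + \dim (@fullv F N))%N.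
Proof.
set p := (linfun (@Datatypes.snd 'rV[F]_a 'rV[F]_b) \o linfun (@fst _ N))%VF.
have p_surj : limg p = fullv.
  apply/eqP; rewrite eqEsubv subvf; apply/subvP => w _; apply/memv_imgP.
  by exists ((0%R, w), 0%R); rewrite ?memvf // comp_lfunE !lfunE.
have := limg_ker_dim p fullv; rewrite p_surj capfv dim_dsum dim_rV.
by rank_lia.
Qed.

Lemma dim_dsum_loops : \dim dsum_loops = a.
Proof.
have := limg_ker_dim snd dsum_cyc; rewrite limg_snd_dsum_cyc dim_dsum_cyc.
by rank_lia.
Qed.

Variable tau : {vspace N} -> nat.
Hypothesis tau_qm : is_qmatroid tau.
Local Notation P := (qdsum (qdsum (@qU F 0 a) (@qU F b b)) tau).

Lemma qrank_dsum V :
  P V = (\dim V - \dim (V :&: dsum_cyc) + tau (snd @: (V :&: dsum_cyc)))%N.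
Proof. exact: qdsum_rank_lker (@qdsum_loops_coloops F a b) tau_qm V. Qed.

Lemma qrank_dsum_sub_cyc U : (U <= dsum_cyc)%VS -> P U = tau (snd @: U).
Proof. by move=> sUC; rewrite qrank_dsum (capv_idPl sUC) subnn. Qed.

Lemma qrank_dsum_embed Y : P (embed @: Y) = tau Y.
Proof. by rewrite qrank_dsum_sub_cyc ?embed_sub_dsum_cyc // snd_embed. Qed.

Lemma qrank_dsum_fullv :
  P fullv = (\dim (@fullv F Z) - \dim dsum_cyc + tau fullv)%N.
Proof. by rewrite qrank_dsum capfv limg_snd_dsum_cyc. Qed.

Lemma limg_dsum_snd : limg snd = fullv.
Proof. by apply/eqP; rewrite eqEsubv subvf -limg_snd_dsum_cyc limgS ?subvf. Qed.

Lemma lpreim_dsum_sndK Y : (snd @: (snd @^-1: Y))%VS = Y.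
Proof. by rewrite lpreimK // limg_dsum_snd subvf. Qed.

Lemma dim_lker_dsum_snd : \dim (lker snd) = (a + b)%N.
Proof. by have := limg_ker_dim snd fullv; rewrite capfv limg_dsum_snd dim_dsum; lia. Qed.

Lemma dim_dsum_preim Y : \dim (snd @^-1: Y) = (a + b + \dim Y)%N.
Proof.
have kerD : (lker snd <= snd @^-1: Y)%VS by rewrite -lpreim0 lpreimS ?sub0v.
have := limg_ker_dim snd (snd @^-1: Y)%VS; rewrite (capv_idPr kerD) dim_lker_dsum_snd.
by rewrite lpreim_dsum_sndK; rank_lia.
Qed.

Lemma qrank_dsum_preim Y : P (snd @^-1: Y) = (b + tau Y)%N.
Proof.
set D := (snd @^-1: Y)%VS.
have kerD : (lker snd <= D)%VS by rewrite -lpreim0 lpreimS ?sub0v.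
have snd_DC : (snd @: (D :&: dsum_cyc) = Y)%VS.
  apply/subv_anti/andP; split.
    by rewrite -[X in (_ <= X)%VS]lpreim_dsum_sndK limgS ?capvSl.
  rewrite -[X in (X <= _)%VS]snd_embed limgS // subv_cap embed_sub_dsum_cyc andbT.
  by apply/subvP => _ /memv_imgP[y yY ->]; rewrite -memv_preim embedE lfunE.
have DC_ker : (D :&: dsum_cyc :&: lker snd = dsum_loops)%VS.
  by rewrite -capvA [(dsum_cyc :&: _)%VS]capvC capvA (capv_idPr kerD) capvC.
have := limg_ker_dim snd (D :&: dsum_cyc)%VS; rewrite DC_ker snd_DC dim_dsum_loops.
by rewrite qrank_dsum snd_DC dim_dsum_preim; rank_lia.
Qed.

Lemma qtight_dsum_preim Y : qtight P (snd @^-1: Y) = qtight tau Y.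
Proof.
rewrite /qtight qrank_dsum_preim qrank_dsum_fullv dim_dsum_preim dim_dsum dim_dsum_cyc.
by apply/idP/idP; have := dimvS (subvf Y); rank_lia.
Qed.

Section FullSummand.
Hypotheses (tau_full : qfull tau) (P_qm : is_qmatroid P).

Lemma qcl0_dsum : qcl P 0%VS = dsum_loops.
Proof.
apply/vspaceP => v; rewrite (mem_qcl0 P_qm) mem_dsum_loops.
have P_line : v \in dsum_cyc -> P <[v]>%VS = tau <[v.2]>%VS.
  by move=> vC; rewrite qrank_dsum_sub_cyc ?limg_line ?lfunE // -memvE.
apply/eqP/andP => [Pv0 | [v12 /eqP v2]]; last first.
  by rewrite P_line ?mem_dsum_cyc // v2 qrank0.
have v_cyc : v \in dsum_cyc.
  apply/negPn/negP => v_notin; move: Pv0; rewrite qrank_dsum capvC.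
  rewrite capv_line_notin // dimv0 dim_vline; case: eqP v_notin => [-> | //].
  by rewrite mem0v.
rewrite -mem_dsum_cyc; split => //.
by apply/eqP/(qfull_rank_line_eq0 tau_qm tau_full); rewrite -P_line.
Qed.

Lemma qtight_dsum_cyc : qtight P dsum_cyc.
Proof.
rewrite /qtight qrank_dsum_fullv qrank_dsum_sub_cyc // limg_snd_dsum_cyc.
by have := dimvS (subvf dsum_cyc); rank_lia.
Qed.

Lemma dsum_cyc_sub_qtight D : qtight P D -> (dsum_cyc <= D)%VS.
Proof.
set W := (D :&: dsum_cyc)%VS; set Y := (snd @: W)%VS => tight_D.
have dimY : (\dim W <= \dim Y + a)%N.
  have := limg_ker_dim snd W.
  have : (W :&: lker snd <= dsum_loops)%VS by rewrite capvS ?capvSr.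
  by move/dimvS; rewrite dim_dsum_loops; rank_lia.
have tight_Y : qtight tau Y.
  move: tight_D; rewrite /qtight qrank_dsum qrank_dsum_fullv -/W -/Y.
  have := qrank_extend_le tau_qm (subvf Y); have := dimvS (subvf Y).
  have := dimvS (capvSl D dsum_cyc); have := dimvS (subvf D); have := dimvS (subvf dsum_cyc).
  by rewrite dim_dsum dim_dsum_cyc -/W; rank_lia.
have Y_full : Y = fullv.
  apply/eqP; rewrite eqEsubv subvf.
  by have [_ <-] := tau_full; apply: qcyc_sub_qtight.
have /eqP <- : W == dsum_cyc; last exact: capvSl.
rewrite eqEdim capvSr; move: tight_D.
rewrite /qtight qrank_dsum qrank_dsum_fullv -/W -/Y Y_full.
have := dimvS (capvSl D dsum_cyc); have := dimvS (subvf D); have := dimvS (subvf dsum_cyc).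
by rank_lia.
Qed.

Lemma qcyc_dsum : qcyc P fullv = dsum_cyc.
Proof. exact: (@qcyc_min_qtight _ _ _ P_qm _ qtight_dsum_cyc dsum_cyc_sub_qtight). Qed.

End FullSummand.

End DirectSumModel.

Section DirectSumUniqueness.
Variables (F : finFieldType) (a b a' b' : nat) (N N' : vectType F).
Variables (tau : {vspace N} -> nat) (tau' : {vspace N'} -> nat).
Hypotheses (tau_qm : is_qmatroid tau) (tau'_qm : is_qmatroid tau').
Hypotheses (tau_full : qfull tau) (tau'_full : qfull tau').
Local Notation P := (qdsum (qdsum (@qU F 0 a) (@qU F b b)) tau).
Local Notation P' := (qdsum (qdsum (@qU F 0 a') (@qU F b' b')) tau').
Hypothesis P_qm : is_qmatroid P.
Variable phi : 'Hom((('rV[F]_a * 'rV[F]_b) * N)%type, (('rV[F]_a' * 'rV[F]_b') * N')%type).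
Hypotheses (phi_inj : lker phi = 0%VS) (phi_surj : limg phi = fullv).
Hypothesis P_phi : forall V, P' (phi @: V)%VS = P V.

Let P'_qm := qmatroid_iso phi_surj P_phi P_qm.

Lemma dsum_loops_iso : dsum_loops a' b' N' = (phi @: dsum_loops a b N)%VS.
Proof.
rewrite -(qcl0_dsum tau'_qm tau'_full P'_qm) -(qcl0_dsum tau_qm tau_full P_qm).
exact (qcl0_iso phi_inj phi_surj P_phi P_qm).
Qed.

Lemma dsum_cyc_iso : dsum_cyc a' b' N' = (phi @: dsum_cyc a b N)%VS.
Proof.
rewrite -(qcyc_dsum tau'_qm tau'_full P'_qm) -(qcyc_dsum tau_qm tau_full P_qm).
exact (qcyc_iso phi_inj phi_surj P_phi P_qm).
Qed.

Lemma dsum_iso_dims : [/\ a = a', b = b' & \dim (@fullv F N) = \dim (@fullv F N')].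
Proof.
have dim_phi V : \dim (phi @: V) = \dim V by rewrite limg_dim_eq // phi_inj capv0.
have := dim_phi (dsum_loops a b N); rewrite -dsum_loops_iso !dim_dsum_loops.
have := dim_phi (dsum_cyc a b N); rewrite -dsum_cyc_iso !dim_dsum_cyc.
have := dim_phi fullv; rewrite phi_surj !dim_dsum.
by move=> *; split; rank_lia.
Qed.

Local Notation embed := (linfun (@dsum_embed F a b N)).
Local Notation snd' := (linfun (@snd ('rV[F]_a' * 'rV[F]_b')%type N')).

Lemma dsum_iso_summand : qequiv tau tau'.
Proof.
have [_ _ dimN] := dsum_iso_dims.
have phi_embed_cyc Y : (phi @: (embed @: Y) <= dsum_cyc a' b' N')%VS.
  by rewrite dsum_cyc_iso limgS ?embed_sub_dsum_cyc.
pose k := (snd' \o (phi \o embed))%VF.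
have k_inj : lker k = 0%VS.
  apply/eqP; rewrite -subv0; apply/subvP => y; rewrite memv_ker memv0 !comp_lfunE.
  move=> /eqP snd_y; have : phi (embed y) \in dsum_loops a' b' N'.
    rewrite memv_cap memv_ker snd_y eqxx andbT.
    by apply: (subvP (phi_embed_cyc fullv)); rewrite !memv_img ?memvf.
  rewrite dsum_loops_iso (mem_limg_iso phi_inj phi_surj) lker0_lfunK ?phi_inj //.
  by rewrite mem_dsum_loops embedE /= => /andP[].
exists k; split => // [|Y].
  by apply/eqP; rewrite eqEdim subvf limg_dim_eq ?k_inj ?capv0 // dimN leqnn.
by rewrite !limg_comp -qrank_dsum_sub_cyc // P_phi qrank_dsum_embed.
Qed.

End DirectSumUniqueness.

Section DirectSumRecognition.
Variables (F : finFieldType) (a b : nat) (N : vectType F).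
Variable sigma : {vspace ('rV[F]_a * 'rV[F]_b) * N} -> nat.
Hypotheses (sigma_qm : is_qmatroid sigma)
  (sigma_cl : qcl sigma 0%VS = dsum_loops a b N)
  (sigma_cyc : qcyc sigma fullv = dsum_cyc a b N).
Local Notation embed := (linfun (@dsum_embed F a b N)).
Local Notation snd := (linfun (@snd ('rV[F]_a * 'rV[F]_b)%type N)).

Definition dsum_summand (Y : {vspace N}) : nat := sigma (embed @: Y).

Lemma dsum_summand_qmatroid : is_qmatroid dsum_summand.
Proof. exact: qmatroid_pullback (lker_embed a b N) sigma_qm _. Qed.

(* [U] and [embed (snd U)] differ by loops. *)
Lemma qrank_sub_dsum_cyc U :
  (U <= dsum_cyc a b N)%VS -> sigma U = dsum_summand (snd @: U).
Proof.
move=> sUC; rewrite /dsum_summand -(qrank_addv_qcl0 sigma_qm U).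
rewrite -(qrank_addv_qcl0 sigma_qm (embed @: _)) sigma_cl; congr sigma.
have loops_diff u : u \in dsum_cyc a b N -> (u - embed (snd u))%R \in dsum_loops a b N.
  by rewrite !mem_dsum_cyc mem_dsum_loops embedE lfunE /= => /eqP->; rewrite !subrr !eqxx.
apply/subv_anti/andP; split; rewrite subv_add addvSr andbT.
  apply/subvP => u uU; rewrite -[u](subrK (embed (snd u))) addrC memv_add ?memv_img //.
  by rewrite loops_diff // (subvP sUC).
apply/subvP => _ /memv_imgP[_ /memv_imgP[u uU ->] ->].
rewrite -[_ (snd u)](subrKC u) memv_add //.
by rewrite -opprB rpredN loops_diff // (subvP sUC).
Qed.

Lemma qrank_dsum_summand W :
  sigma W = qdsum (qdsum (@qU F 0 a) (@qU F b b)) dsum_summand W.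
Proof.
rewrite (qrank_dsum dsum_summand_qmatroid) (qrank_split_qcyc sigma_qm W) sigma_cyc.
by rewrite qrank_sub_dsum_cyc ?capvSr // addnC.
Qed.

Lemma qcl0_dsum_summand : qcl dsum_summand 0%VS = 0%VS.
Proof.
apply/vspaceP => y; rewrite (mem_qcl0 dsum_summand_qmatroid) memv0 /dsum_summand.
by rewrite limg_line -(mem_qcl0 sigma_qm) sigma_cl mem_dsum_loops embedE /= eqxx.
Qed.

(* The preimage under [snd] of the cyclic core of the summand is tight for [sigma]. *)
Lemma qcyc_dsum_summand : qcyc dsum_summand fullv = fullv.
Proof.
set T := qcyc dsum_summand fullv.
have : qtight sigma (snd @^-1: T).
  rewrite /qtight !qrank_dsum_summand -/(qtight _ _).
  rewrite qtight_dsum_preim; last exact: dsum_summand_qmatroid.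
  exact: (qtight_qcyc dsum_summand_qmatroid).
move/(qcyc_sub_qtight sigma_qm); rewrite sigma_cyc => sCT.
apply/eqP; rewrite eqEsubv subvf; apply/subvP => y _.
have /(subvP sCT) : embed y \in dsum_cyc a b N by rewrite mem_dsum_cyc embedE.
by rewrite -memv_preim lfunE embedE.
Qed.

Lemma qfull_dsum_summand : qfull dsum_summand.
Proof. by split; [exact: qcl0_dsum_summand | exact: qcyc_dsum_summand]. Qed.

End DirectSumRecognition.

Lemma mem_limg_hom (K : fieldType) (aT rT : vectType K) (j : 'Hom(aT, rT)) U x :
  limg j = U -> j x \in U.
Proof. by move<-; rewrite memv_img ?memvf. Qed.

Section RowCombination.
Variables (K : fieldType) (vT : vectType K) (n : nat) (e : n.-tuple vT).

Definition rV_comb (u : 'rV[K]_n) : vT := (\sum_i u 0 i *: e`_i)%R.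

Lemma rV_comb_linear : linear rV_comb.
Proof.
move=> k u v; rewrite /rV_comb scaler_sumr -big_split; apply: eq_bigr => i _.
by rewrite !mxE scalerDl scalerA.
Qed.

HB.instance Definition _ := GRing.isSemilinear.Build K 'rV[K]_n vT _ rV_comb
  (GRing.semilinear_linear rV_comb_linear).

Lemma lker_rV_comb : free e -> lker (linfun rV_comb) = 0%VS.
Proof.
move=> e_free; apply/eqP; rewrite -subv0; apply/subvP => u.
rewrite memv_ker memv0 lfunE => /eqP u0; apply/eqP/rowP => i; rewrite mxE.
by rewrite -(coord_sum_free (fun j => u 0%R j) i e_free) -/(rV_comb u) u0 linear0.
Qed.

Lemma limg_rV_comb_sub : (limg (linfun rV_comb) <= <<e>>)%VS.
Proof.
apply/subvP => _ /memv_imgP[u _ ->]; rewrite lfunE.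
by apply: memv_suml => i _; rewrite memvZ // memv_span ?memt_nth.
Qed.

End RowCombination.

Lemma exists_rV_iso (F : fieldType) (E : vectType F) (U : {vspace E}) n :
  n = \dim U -> exists j : 'Hom('rV[F]_n, E), lker j = 0%VS /\ limg j = U.
Proof.
move->.
have [U_span U_free] := andP (vbasisP U).
have j_inj := lker_rV_comb U_free.
exists (linfun (rV_comb (vbasis U))); split=> //.
apply/eqP; rewrite eqEdim; have := limg_rV_comb_sub (vbasis U); rewrite (eqP U_span) => ->.
by rewrite limg_dim_eq ?j_inj ?capv0 // dim_rV leqnn.
Qed.

Section AdaptedBasis.
Variables (F : finFieldType) (E : vectType F) (L C : {vspace E}) (l f m : nat).
Hypothesis sLC : (L <= C)%VS.
Variables (j1 : 'Hom('rV[F]_l, E)) (j2 : 'Hom('rV[F]_f, E)) (j3 : 'Hom('rV[F]_m, E)).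
Hypotheses (j1_img : limg j1 = L) (j2_img : limg j2 = C^C%VS) (j3_img : limg j3 = (C :\: L)%VS).
Hypothesis dimE : \dim (@fullv F E) = (l + f + m)%N.
Local Notation Z := (('rV[F]_l * 'rV[F]_f) * 'rV[F]_m)%type.

Definition adapted_iso : 'Hom(Z, E) :=
  ((j1 \o (linfun (@fst 'rV[F]_l 'rV[F]_f) \o linfun (@fst _ 'rV[F]_m)))
   + (j2 \o (linfun (@snd 'rV[F]_l 'rV[F]_f) \o linfun (@fst _ 'rV[F]_m)))
   + (j3 \o linfun (@snd ('rV[F]_l * 'rV[F]_f)%type 'rV[F]_m)))%VF%R.
Local Notation h := adapted_iso.

Lemma adapted_isoE z : h z = (j1 z.1.1 + j2 z.1.2 + j3 z.2)%R.
Proof. by rewrite !add_lfunE !comp_lfunE !lfunE. Qed.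

Lemma limg_adapted_iso_loops : (h @: dsum_loops l f 'rV[F]_m)%VS = L.
Proof.
apply/vspaceP => x; apply/memv_imgP/idP => [[z] | ].
  rewrite mem_dsum_loops => /andP[/eqP z12 /eqP z2] ->.
  by rewrite adapted_isoE z12 z2 !linear0 !addr0 mem_limg_hom.
rewrite -j1_img => /memv_imgP[u _ ->]; exists ((u, 0%R), 0%R).
  by rewrite mem_dsum_loops !eqxx.
by rewrite adapted_isoE !linear0 !addr0.
Qed.

Lemma limg_adapted_iso_cyc : (h @: dsum_cyc l f 'rV[F]_m)%VS = C.
Proof.
apply/vspaceP => x; apply/memv_imgP/idP => [[z] | ].
  rewrite mem_dsum_cyc => /eqP z12 ->; rewrite adapted_isoE z12 linear0 addr0 rpredD //.
    exact: (subvP sLC) (mem_limg_hom _ j1_img).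
  exact: (subvP (diffvSl C L)) (mem_limg_hom _ j3_img).
rewrite -{1}(addv_diff_cap C L) (capv_idPr sLC) -j3_img -j1_img.
case/memv_addP => _ /memv_imgP[s _ ->] [_ /memv_imgP[u _ ->] ->].
exists ((u, 0%R), s); first by rewrite mem_dsum_cyc.
by rewrite adapted_isoE linear0 addr0 addrC.
Qed.

Lemma limg_adapted_iso : limg h = fullv.
Proof.
apply/eqP; rewrite eqEsubv subvf -(addv_complf C) subv_add.
rewrite -[X in (X <= _)%VS]limg_adapted_iso_cyc limgS ?subvf //=.
apply/subvP => y; rewrite -j2_img => /memv_imgP[v _ ->].
apply/memv_imgP; exists ((0%R, v), 0%R); rewrite ?memvf //.
by rewrite adapted_isoE !linear0 add0r addr0.
Qed.

Lemma lker_adapted_iso : lker h = 0%VS.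
Proof.
have := limg_ker_dim h fullv; rewrite capfv limg_adapted_iso dimE dim_dsum !dim_rV.
by move=> dim_ker; apply/eqP; rewrite -dimv_eq0; lia.
Qed.

End AdaptedBasis.

Lemma exists_adapted_iso (F : finFieldType) (E : vectType F) (L C : {vspace E}) (l f m : nat) :
  (L <= C)%VS -> l = \dim L -> f = (\dim (@fullv F E) - \dim C)%N -> m = (\dim C - \dim L)%N ->
  exists h : 'Hom((('rV[F]_l * 'rV[F]_f) * 'rV[F]_m)%type, E),
    [/\ lker h = 0%VS, limg h = fullv,
        (h @: dsum_loops l f 'rV[F]_m)%VS = L & (h @: dsum_cyc l f 'rV[F]_m)%VS = C].
Proof.
move=> sLC dimL dimC dimM.
have [j1 [_ j1_img]] := exists_rV_iso dimL.
have [j2 [_ j2_img]] := exists_rV_iso (etrans dimC (esym (dimv_compl C))).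
have dim_diff : m = \dim (C :\: L).
  by have := dimv_cap_compl C L; rewrite (capv_idPr sLC); lia.
have [j3 [_ j3_img]] := exists_rV_iso dim_diff.
have dimE : \dim (@fullv F E) = (l + f + m)%N.
  by have := dimvS sLC; have := dimvS (subvf C); lia.
exists (adapted_iso j1 j2 j3); split.
- exact (lker_adapted_iso sLC j1_img j2_img j3_img dimE).
- exact (limg_adapted_iso sLC j1_img j2_img j3_img).
- exact (limg_adapted_iso_loops j2 j3 j1_img).
- exact (limg_adapted_iso_cyc sLC j2 j1_img j3_img).
Qed.

Lemma qmatroid_dsum_decomposition (F : finFieldType) (E : vectType F)
    (rho : {vspace E} -> nat) :
  is_qmatroid rho ->
  let l := \dim (qcl rho 0%VS) in
  let f := (\dim (@fullv F E) - \dim (qcyc rho fullv))%N in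
  let m := (\dim (qcyc rho fullv) - \dim (qcl rho 0%VS))%N in
  exists2 tau : {vspace 'rV[F]_m} -> nat, is_qmatroid tau /\ qfull tau
    & qequiv rho (qdsum (qdsum (@qU F 0 l) (@qU F f f)) tau).
Proof.
move=> rho_qm l f m.
have [h [h_inj h_surj h_loops h_cyc]] :=
  exists_adapted_iso (qcl0_sub_qcyc rho_qm) (erefl l) (erefl f) (erefl m).
pose sigma V := rho (h @: V)%VS.
have rho_h V : rho (h @: V)%VS = sigma V by [].
have sigma_qm : is_qmatroid sigma := qmatroid_pullback h_inj rho_qm rho_h.
have /eqP sigma_cl : qcl sigma 0%VS == dsum_loops l f 'rV[F]_m.
  by rewrite -(eq_limg_ker0 _ _ (introT eqP h_inj)) h_loops -(qcl0_iso h_inj h_surj rho_h).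
have /eqP sigma_cyc : qcyc sigma fullv == dsum_cyc l f 'rV[F]_m.
  by rewrite -(eq_limg_ker0 _ _ (introT eqP h_inj)) h_cyc -(qcyc_iso h_inj h_surj rho_h).
exists (dsum_summand sigma).
  by split; [exact: dsum_summand_qmatroid | exact: qfull_dsum_summand].
apply: qequiv_sym; exists h; split=> // V.
by rewrite -(qrank_dsum_summand sigma_qm sigma_cl sigma_cyc).
Qed.

Lemma qequiv_qmatroid (F : finFieldType) (E1 E2 : vectType F)
    (rho1 : {vspace E1} -> nat) (rho2 : {vspace E2} -> nat) :
  qequiv rho1 rho2 -> is_qmatroid rho1 -> is_qmatroid rho2.
Proof. by case=> g [_ g_surj rho_g] /(qmatroid_iso g_surj rho_g). Qed.

Lemma qequiv_dsum_full_inj (F : finFieldType) (a b a' b' : nat) (N N' : vectType F)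
    (tau : {vspace N} -> nat) (tau' : {vspace N'} -> nat) :
  is_qmatroid tau -> is_qmatroid tau' -> qfull tau -> qfull tau' ->
  is_qmatroid (qdsum (qdsum (@qU F 0 a) (@qU F b b)) tau) ->
  qequiv (qdsum (qdsum (@qU F 0 a) (@qU F b b)) tau)
         (qdsum (qdsum (@qU F 0 a') (@qU F b' b')) tau') ->
  [/\ a = a', b = b' & qequiv tau tau'].
Proof.
move=> tau_qm tau'_qm tau_full tau'_full P_qm [phi [phi_inj phi_surj P_phi]].
have [a_eq b_eq _] := dsum_iso_dims tau_qm tau'_qm tau_full tau'_full P_qm phi_inj phi_surj P_phi.
split=> //.
exact (dsum_iso_summand tau_qm tau'_qm tau_full tau'_full P_qm phi_inj phi_surj P_phi).
Qed.

Theorem theorem7p9 (F : finFieldType) (E : vectType F) (rho : {vspace E} -> nat) :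
  is_qmatroid rho ->
  let l : nat := \dim (qcl rho 0%VS) in
  let f : nat := (\dim (@fullv F E) - \dim (qcyc rho fullv))%N in
  exists (E' : vectType F) (rho' : {vspace E'} -> nat),
    [/\ is_qmatroid rho', qfull rho',
        qequiv rho (qdsum (qdsum (@qU F 0 l) (@qU F f f)) rho')
      & forall (a b : nat) (N : vectType F) (rhoN : {vspace N} -> nat),
          is_qmatroid rhoN -> qfull rhoN ->
          qequiv rho (qdsum (qdsum (@qU F 0 a) (@qU F b b)) rhoN) ->
          [/\ a = l, b = f & qequiv rhoN rho']].
Proof.
move=> rho_qm l f.
have [tau [tau_qm tau_full] rho_tau] := qmatroid_dsum_decomposition rho_qm.
exists _, tau; split=> // a b N rhoN rhoN_qm rhoN_full rho_rhoN.
have P_qm := qequiv_qmatroid rho_rhoN rho_qm.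
exact: qequiv_dsum_full_inj rhoN_qm tau_qm rhoN_full tau_full P_qm
  (qequiv_trans (qequiv_sym rho_rhoN) rho_tau).
Qed.
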